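(* Let $\Omega$ be a finite set of $M$ states and consider a time series $\omega^{1}\omega^{2}\omega^{3}\cdots$ with $\omega^{i}\in\Omega$. Let $\Pi$ be its predictability and $R$ the Bayes error rate of the $M$-classification problem whose samples are indexed by the time steps $i=1,\dots,n$, with sample $i$ having class label $\omega^{i}$ and feature $x_{i-1}=\omega^{1}\cdots\omega^{i-1}$, the series before that state ($x_0=\varnothing$), in the limit $n\to\infty$. Then $$\Pi = 1-R.$$
   Context: Predictability: for $n\ge 1$ let $x_{n-1}=\omega^{1}\cdots\omega^{n-1}$ denote the history before time $n$. Let $\pi(x_{n-1})=\sup_{\omega\in\Omega}\Pr[\omega^{n}=\omega\mid x_{n-1}]$ be the probability of the most probable next state given the history. The predictability of the $n$-th state is $\Pi(n)=\sum_{x_{n-1}}P(x_{n-1})\,\pi(x_{n-1})$, where $P(x_{n-1})$ is the probability of observing the history $x_{n-1}$ and the sum runs over all possible histories of length $n-1$. The overall predictability is $\Pi=\lim_{n\to\infty}\frac{1}{n}\sum_{i=1}^{n}\Pi(i)$. Bayes error rate: for an $M$-class problem with classes $\omega_1,\dots,\omega_M$, prior probabilities $p(\omega_j)$, feature set $X'$ and class-conditional densities $p(x\mid\omega_j)$, $$R=1-\sum_{j=1}^{M}\int_{\Gamma_j}p(\omega_j)\,p(x\mid\omega_j)\,dx,$$ where $\Gamma_j=\{x\in X' : p(\omega_j)p(x\mid\omega_j)>\max_{k\neq j}p(\omega_k)p(x\mid\omega_k)\}$. *)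

From HB Require Import structures.
From mathcomp Require Import all_boot all_order all_algebra.
From mathcomp Require Import all_classical all_reals all_analysis.
Set Implicit Arguments. Unset Strict Implicit. Unset Printing Implicit Defensive.
Import Order.TTheory GRing.Theory Num.Theory.
Local Open Scope ring_scope.

Section Defs.
Variables (R : realType) (Om : finType).

(* The law of the time series w^1 w^2 ... is given by its finite-dimensional
   distributions: P s = probability that the series starts with the word s. *)
Definition is_process_law (P : seq Om -> R) : Prop :=
  [/\ P [::] = 1, (forall s, 0 <= P s) &
      (forall s, P s = \sum_(w : Om) P (rcons s w))].

Variable P : seq Om -> R.

Definition cond_prob (x : seq Om) (w : Om) : R := P (rcons x w) / P x.

Definition pi_max (x : seq Om) : R := \big[Num.max/0]_(w : Om) cond_prob x w.

Definition Pi_n (n : nat) : R := \sum_(x : n.-1.-tuple Om) P x * pi_max x.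

Definition avg_Pi (n : nat) : R := n%:R^-1 * \sum_(1 <= i < n.+1) Pi_n i.

(* The classification problem with samples i = 1..n: sample i has class
   w^i and feature x_{i-1} (a word of length i-1 < n).
   prior n w = p(w) = (1/n) sum_i Pr[w^i = w]. *)
Definition prior (n : nat) (w : Om) : R :=
  n%:R^-1 * \sum_(1 <= i < n.+1) \sum_(x : i.-1.-tuple Om) P (rcons x w).

(* joint probability that a sample (uniform over i = 1..n) has feature x
   and class w *)
Definition joint (n : nat) (x : seq Om) (w : Om) : R :=
  if (size x < n)%N then n%:R^-1 * P (rcons x w) else 0.

Definition cdens (n : nat) (x : seq Om) (w : Om) : R := joint n x w / prior n w.

Definition discr (n : nat) (w : Om) (x : seq Om) : R := prior n w * cdens n x w.

(* Bayes decision region Gamma_j: j attains the maximum of p(w)p(x|w);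
   ties are broken in favour of the class of smallest enum_rank. *)
Definition Gamma (n : nat) (j : Om) (x : seq Om) : bool :=
  [forall k, discr n k x <= discr n j x] &&
  [forall k, (enum_rank k < enum_rank j)%N ==> (discr n k x < discr n j x)].

(* R = 1 - sum_j int_{Gamma_j} p(w_j) p(x|w_j) dx, the feature space being
   the words of length 0..n-1 (counting measure). *)
Definition bayes_error (n : nat) : R :=
  1 - \sum_(j : Om) \sum_(i < n) \sum_(x : i.-tuple Om | Gamma n j x) discr n j x.

End Defs.

(* For every n the Bayes error is exactly 1 - (1/n) sum_i Pi(i), which gives the
   limit statement at once. A sample of the classification problem with feature
   x (a history of length i-1 < n) and class w has joint probability P(x w)/n, so
   p(w) p(x|w) = P(x w)/n whatever the prior, and the Bayes rule picks in each
   feature x one class maximising P(x w). The success probability of the Bayes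
   rule is therefore (1/n) sum_i sum_{|x| = i-1} max_w P(x w), and
   max_w P(x w) = P(x) pi(x) is precisely the summand of Pi(i). *)
From HB Require Import structures.
From mathcomp Require Import all_boot all_order all_algebra.
From mathcomp Require Import all_classical all_reals all_analysis.
Import Order.TTheory GRing.Theory Num.Theory.
Import numFieldNormedType.Exports.
Local Open Scope classical_set_scope.
Local Open Scope ring_scope.

Lemma ler_psum_term {R : numDomainType} {I : finType} (F : I -> R) (j : I) :
  (forall i, 0 <= F i) -> F j <= \sum_i F i.
Proof.
by move=> F0; rewrite (bigD1 j) //= ler_wpDr // sumr_ge0.
Qed.

Lemma mulr_bigmax {R : realDomainType} {I : Type} (r : seq I) (P : pred I)
    (F : I -> R) (c : R) :
  0 <= c -> c * \big[Num.max/0]_(i <- r | P i) F i =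
            \big[Num.max/0]_(i <- r | P i) (c * F i).
Proof.
move=> c0; apply: (big_ind2 (fun a b => c * a = b)) => [|a a' b b' <- <-|//].
  by rewrite mulr0.
by rewrite maxr_pMr.
Qed.

Lemma cvg_subl {K : numFieldType} {T : Type} (F : set_system T) {FF : Filter F}
    (f : T -> K) (c l : K) :
  f @ F --> l <-> (fun x => c - f x) @ F --> c - l.
Proof.
split => [fl | cfl]; first exact: cvgB (cvg_cst c) fl.
have -> : f = (fun x => c - (c - f x)) by apply: funext => x; rewrite subKr.
by rewrite -[l](subKr c); exact: cvgB (cvg_cst c) cfl.
Qed.

Section FirstArgmax.
Context {R : realDomainType} {I : finType} (f : I -> R).

Definition first_argmax (j : I) : bool :=
  [forall k, f k <= f j] &&
  [forall k, (enum_rank k < enum_rank j)%N ==> (f k < f j)].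

Lemma first_argmax_uniq j k : first_argmax j -> first_argmax k -> j = k.
Proof.
move=> /andP[/forallP jmax /forallP jfirst] /andP[/forallP kmax /forallP kfirst].
have fjk : f j = f k by apply/eqP; rewrite eq_le jmax kmax.
apply/enum_rank_inj/ord_inj.
have [jk|kj|//] := ltngtP (enum_rank j) (enum_rank k).
  by move: (implyP (kfirst j) jk); rewrite fjk ltxx.
by move: (implyP (jfirst k) kj); rewrite fjk ltxx.
Qed.

Lemma exists_first_argmax (i0 : I) : exists j, first_argmax j.
Proof.
have [m _ fmax] := @arg_maxP _ R I i0 xpredT f isT.
have fm k : f k <= f m by exact: fmax.
have [j /eqP fj jmin] := @arg_minnP I m (fun i => f i == f m) enum_rank (eqxx _).
exists j; apply/andP; split; apply/forallP => k; first by rewrite fj fm.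
apply/implyP => kj; rewrite lt_neqAle fj fm andbT.
by apply: contraL kj => /jmin; rewrite -leqNgt.
Qed.

Lemma sum_first_argmax :
  (forall i, 0 <= f i) -> \sum_(j | first_argmax j) f j = \big[Num.max/0]_i f i.
Proof.
move=> f0; have [i0 _|noI] := pickP (@predT I); last first.
  by rewrite !big_pred0 // => i; have := noI i.
have [j jfirst] := exists_first_argmax i0.
rewrite (big_pred1 j) => [|k]; last first.
  by apply/idP/eqP => [kfirst|->//]; exact: first_argmax_uniq kfirst jfirst.
have /andP[/forallP jmax _] := jfirst.
by apply/eqP; rewrite eq_le le_bigmax bigmax_le.
Qed.

End FirstArgmax.

Section BayesError.
Context {R : realType} {Om : finType} {P : seq Om -> R}.
Hypothesis HP : is_process_law P.

Lemma law_ge0 s : 0 <= P s.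
Proof. by case: HP. Qed.

Lemma law_rcons_eq0 x w : P x = 0 -> P (rcons x w) = 0.
Proof.
case: HP => _ P_ge0 P_sum Px0.
by apply: (@psumr_eq0P _ _ xpredT (fun w => P (rcons x w))) => //; rewrite -P_sum.
Qed.

Lemma mul_pi_max x : P x * pi_max P x = \big[Num.max/0]_w P (rcons x w).
Proof.
rewrite /pi_max mulr_bigmax ?law_ge0 //; apply: eq_bigr => w _.
have [Px0|Pxn0] := eqVneq (P x) 0; first by rewrite Px0 mul0r law_rcons_eq0.
by rewrite /cond_prob mulrCA mulfV ?mulr1.
Qed.

Lemma joint_ge0 n x w : 0 <= joint P n x w.
Proof. by rewrite /joint; case: ifP => // _; rewrite mulr_ge0 ?invr_ge0 ?law_ge0. Qed.

Lemma joint_le_prior n x w : joint P n x w <= prior P n w.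
Proof.
have sum_ge0 k : 0 <= \sum_(t : k.-tuple Om) P (rcons t w).
  by apply: sumr_ge0 => t _; exact: law_ge0.
rewrite /joint /prior; case: ifP => [xn|_]; last first.
  by rewrite mulr_ge0 ?invr_ge0 ?sumr_ge0.
rewrite ler_wpM2l ?invr_ge0 // big_add1 big_mkord /=.
pose S (i : 'I_n) := \sum_(t : i.-tuple Om) P (rcons t w).
apply: le_trans _ (ler_psum_term S (Ordinal xn) (fun i => sum_ge0 i)).
exact: (ler_psum_term (fun t : (size x).-tuple Om => P (rcons t w)) (in_tuple x)
  (fun t => law_ge0 _)).
Qed.

Lemma discrE n w x : discr P n w x = joint P n x w.
Proof.
rewrite /discr /cdens; have [p0|pn0] := eqVneq (prior P n w) 0; last first.
  by rewrite mulrC divfK.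
rewrite p0 mul0r; apply/esym/le_anti; rewrite joint_ge0 andbT -p0.
exact: joint_le_prior.
Qed.

Lemma sum_Gamma_discr n x : (size x < n)%N ->
  \sum_(j | Gamma P n j x) discr P n j x = n%:R^-1 * (P x * pi_max P x).
Proof.
move=> xn.
rewrite (_ : \sum_(j | Gamma P n j x) _ =
             \sum_(j | first_argmax (discr P n ^~ x) j) discr P n j x) //.
rewrite sum_first_argmax => [|w]; last by rewrite discrE joint_ge0.
rewrite mul_pi_max mulr_bigmax ?invr_ge0 //; apply: eq_bigr => w _.
by rewrite discrE /joint xn.
Qed.

Lemma bayes_errorE n : bayes_error P n = 1 - avg_Pi P n.
Proof.
rewrite /bayes_error /avg_Pi; congr (1 - _).
rewrite exchange_big big_add1 big_mkord mulr_sumr /=; apply: eq_bigr => i _.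
rewrite (exchange_big_dep xpredT) //= /Pi_n mulr_sumr; apply: eq_bigr => x _.
by rewrite sum_Gamma_discr // size_tuple.
Qed.

End BayesError.

Theorem theorem1 (R : realType) (Om : finType) (P : seq Om -> R) :
  is_process_law P ->
  forall l : R,
    ((fun n => avg_Pi P n) @ \oo --> l) <->
    ((fun n => bayes_error P n) @ \oo --> 1 - l).
Proof.
move=> HP l; rewrite (funext (bayes_errorE HP)).
exact: cvg_subl.
Qed.
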